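(* Let $d\ge2$ and let $\mathcal{E}_d$ be the set of symmetrically extendible states on $\mathbb{C}^d\otimes\mathbb{C}^d$. Then $$\max_{\sigma\in\mathcal{E}_d}\langle\Psi_+|\sigma|\Psi_+\rangle=F_{\max}:=\frac{d+1}{2d},$$ and the isotropic state $\rho(d,F)$ is symmetrically extendible for every $F\le F_{\max}$; in particular $\rho(d,F_{\max})$ has the symmetric extension $$\Omega_{ABE}=\frac{1}{2d}(S_0+S_1),\quad S_0=\frac{d(X+VXV)-(XV+VX)}{d^2-1},\quad S_1=\frac{d(XV+VX)-(X+VXV)}{d^2-1},$$ with $X=|\Phi\rangle\langle\Phi|\otimes I$, $|\Phi\rangle=\sum_i|ii\rangle$, and $V=\sum_{i,j,k}|ijk\rangle\langle ikj|$ the swap of the second and third tensor factors of $(\mathbb{C}^d)^{\otimes3}$.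
   Context: A state $\rho_{AB}$ on $\mathcal{H}_A\otimes\mathcal{H}_B$ is called symmetrically extendible if there is a state $\rho_{ABB'}$ on $\mathcal{H}_A\otimes\mathcal{H}_B\otimes\mathcal{H}_{B'}$, with $\mathcal{H}_{B'}\cong\mathcal{H}_B$, such that $\rho_{ABB'}$ is invariant under the swap of $B$ and $B'$ and $\mathrm{Tr}_{B'}\rho_{ABB'}=\rho_{AB}$. $|\Psi_+\rangle=\frac1{\sqrt d}\sum_{i=0}^{d-1}|ii\rangle$, $P_+=|\Psi_+\rangle\langle\Psi_+|$. The isotropic state with fidelity $F\in[0,1]$ is $\rho(d,F)=\frac{d^2}{d^2-1}\big[(1-F)\frac{I}{d^2}+(F-\frac{1}{d^2})P_+\big]$, which satisfies $\langle\Psi_+|\rho(d,F)|\Psi_+\rangle=F$. *)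

(* Complex scalars: an arbitrary numClosedFieldType C
   (e.g. the complex numbers R[i] over a real closed field / realType R, or algC). *)
From HB Require Import structures.
From mathcomp Require Import all_boot all_order all_algebra.
Set Implicit Arguments. Unset Strict Implicit. Unset Printing Implicit Defensive.
Import Order.TTheory GRing.Theory Num.Theory Num.Def.
Local Open Scope ring_scope.

Section QDefs.
Variable C : numClosedFieldType.

Definition adj {m n} (A : 'M[C]_(m, n)) : 'M[C]_(n, m) := (map_mx conjC A)^T.

Definition psd {n} (A : 'M[C]_n) : Prop :=
  forall v : 'cV[C]_n, 0 <= (adj v *m A *m v) 0 0.

Definition is_state {n} (A : 'M[C]_n) : Prop := psd A /\ \tr A = 1.

(* basis |a b> of C^d (x) C^d, and |a b c> of (C^d)^(x)3 = (C^d (x) C^d) (x) C^d *)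
Definition ket2 {d} (a b : 'I_d) : 'I_(d * d) := mxvec_index a b.
Definition ket3 {d} (a b c : 'I_d) : 'I_(d * d * d) := mxvec_index (ket2 a b) c.

Definition Phi d : 'cV[C]_(d * d) :=
  \col_k (\sum_(i < d) (k == ket2 i i)%:R).
Definition PsiPlus d : 'cV[C]_(d * d) := (sqrtC d%:R)^-1 *: Phi d.
Definition Pplus d : 'M[C]_(d * d) := PsiPlus d *m adj (PsiPlus d).

Definition fidelity {d} (sigma : 'M[C]_(d * d)) : C :=
  (adj (PsiPlus d) *m sigma *m PsiPlus d) 0 0.

Definition isotropic d (F : C) : 'M[C]_(d * d) :=
  ((d ^ 2)%:R / (d ^ 2 - 1)%:R) *:
    ((1 - F) / (d ^ 2)%:R *: 1%:M + (F - ((d ^ 2)%:R)^-1) *: Pplus d).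

Definition Vswap d : 'M[C]_(d * d * d) :=
  \sum_(i < d) \sum_(j < d) \sum_(k < d)
     delta_mx (ket3 i j k) (ket3 i k j).

(* partial trace over the third factor B' (= E) *)
Definition ptr3 d (W : 'M[C]_(d * d * d)) : 'M[C]_(d * d) :=
  \matrix_(x, y) \sum_(k < d) W (mxvec_index x k) (mxvec_index y k).

Definition sym_ext_by d (rho : 'M[C]_(d * d)) (W : 'M[C]_(d * d * d)) : Prop :=
  is_state W /\ Vswap d *m W *m Vswap d = W /\ ptr3 W = rho.
Definition sym_extendible d (rho : 'M[C]_(d * d)) : Prop :=
  exists W, sym_ext_by rho W.

Definition in_Ed d (sigma : 'M[C]_(d * d)) : Prop :=
  is_state sigma /\ sym_extendible sigma.

Definition Fmax d : C := (d + 1)%:R / (2 * d)%:R.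

(* X = |Phi><Phi| (x) I = sum_{i,j,k} |iik><jjk| *)
Definition Xop d : 'M[C]_(d * d * d) :=
  \sum_(i < d) \sum_(j < d) \sum_(k < d) delta_mx (ket3 i i k) (ket3 j j k).

Definition S0 d : 'M[C]_(d * d * d) :=
  ((d ^ 2 - 1)%:R)^-1 *: (d%:R *: (Xop d + Vswap d *m Xop d *m Vswap d)
                       - (Xop d *m Vswap d + Vswap d *m Xop d)).
Definition S1 d : 'M[C]_(d * d * d) :=
  ((d ^ 2 - 1)%:R)^-1 *: (d%:R *: (Xop d *m Vswap d + Vswap d *m Xop d)
                       - (Xop d + Vswap d *m Xop d *m Vswap d)).
Definition Omega d : 'M[C]_(d * d * d) := ((2 * d)%:R)^-1 *: (S0 d + S1 d).

End QDefs.

(* Write u_k = |Phi>|k> and v_k = V u_k, so that <Psi+|Tr_E W|Psi+> = (1/d) sum_k <u_k|W|u_k>.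
   Splitting |kkk> off u_k and v_k, the remaining 2(d-1) basis vectors of the u_k and v_k
   index pairwise distinct diagonal entries of W, and Cauchy-Schwarz on them gives
   sum_k (<u_k|W|u_k> + <v_k|W|v_k>) <= (d+1) tr W for every psd W.  If W is swap invariant
   the two terms agree, whence F <= (d+1)/(2d).  Conversely, with S = 1 + V one has
   Omega proportional to S X S, which extends rho(d,Fmax); the same inequality shows that
   (d+1) S - S X S is psd, and a multiple of it extends rho(d,0).  Since rho(d,F) is affine
   in F and mixing symmetric extensions extends the mixture, every rho(d,F) with
   0 <= F <= Fmax is symmetrically extendible. *)

From HB Require Import structures.
From mathcomp Require Import all_boot all_order all_algebra.
From mathcomp Require Import ring.
Import Order.TTheory GRing.Theory Num.Theory Num.Def.
Local Open Scope ring_scope.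
Set Implicit Arguments. Unset Strict Implicit. Unset Printing Implicit Defensive.

Lemma sumr_ord_only (V : nmodType) n (z : 'I_n) (F : 'I_n -> V) :
  (forall k, k != z -> F k = 0) -> \sum_(k < n) F k = F z.
Proof. by move=> F0; rewrite (bigD1 z) //= big1 ?addr0. Qed.
Arguments sumr_ord_only {V n} z {F}.

Lemma sum_mxvec (V : nmodType) m n (F : 'I_(m * n) -> V) :
  \sum_k F k = \sum_(i < m) \sum_(j < n) F (mxvec_index i j).
Proof.
rewrite (reindex _ (curry_mxvec_bij m n)) /= pair_bigA /=.
by apply: eq_bigr => -[i j].
Qed.

Lemma mxvec_index_eq m n (i i' : 'I_m) (j j' : 'I_n) :
  (mxvec_index i j == mxvec_index i' j') = (i == i') && (j == j').
Proof.
by rewrite /mxvec_index (inj_eq (@cast_ord_inj _ _ _)) (inj_eq (@enum_rank_inj _)).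
Qed.

Section Sesquilinear.
Variable C : numClosedFieldType.

Lemma adjD m n (A B : 'M[C]_(m, n)) : adj (A + B) = adj A + adj B.
Proof. by rewrite /adj map_mxD linearD. Qed.

Lemma adjZ m n a (A : 'M[C]_(m, n)) : adj (a *: A) = a^* *: adj A.
Proof. by rewrite /adj map_mxZ linearZ. Qed.

Lemma adjM m n p (A : 'M[C]_(m, n)) (B : 'M[C]_(n, p)) :
  adj (A *m B) = adj B *m adj A.
Proof. by rewrite /adj map_mxM trmx_mul. Qed.

Lemma adjK m n (A : 'M[C]_(m, n)) : adj (adj A) = A.
Proof. by apply/matrixP => i j; rewrite !mxE conjCK. Qed.

Lemma adj_delta m n i j : adj (delta_mx i j : 'M[C]_(m, n)) = delta_mx j i.
Proof. by rewrite /adj map_delta_mx trmx_delta. Qed.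

Lemma adj1 n : adj (1%:M : 'M[C]_n) = 1%:M.
Proof. by apply/matrixP => i j; rewrite !mxE conjC_nat eq_sym. Qed.

Lemma adj_sum m n I (r : seq I) (P : pred I) (F : I -> 'M[C]_(m, n)) :
  adj (\sum_(i <- r | P i) F i) = \sum_(i <- r | P i) adj (F i).
Proof. by rewrite /adj map_mx_sum linear_sum. Qed.

Lemma adj_entry m n (A : 'M[C]_(m, n)) i j : adj A i j = (A j i)^*.
Proof. by rewrite !mxE. Qed.

Definition braket n (W : 'M[C]_n) (x y : 'cV[C]_n) : C := (adj x *m W *m y) 0 0.

Section Braket.
Variables (n : nat) (W : 'M[C]_n).

Lemma braketDl x x' y : braket W (x + x') y = braket W x y + braket W x' y.
Proof. by rewrite /braket adjD !mulmxDl mxE. Qed.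
Lemma braketDr x y y' : braket W x (y + y') = braket W x y + braket W x y'.
Proof. by rewrite /braket mulmxDr mxE. Qed.
Lemma braketZl a x y : braket W (a *: x) y = a^* * braket W x y.
Proof. by rewrite /braket adjZ -!scalemxAl mxE. Qed.
Lemma braketZr a x y : braket W x (a *: y) = a * braket W x y.
Proof. by rewrite /braket -scalemxAr mxE. Qed.
Lemma braketNl x y : braket W (- x) y = - braket W x y.
Proof. by rewrite -scaleN1r braketZl conjCN1 mulN1r. Qed.
Lemma braketNr x y : braket W x (- y) = - braket W x y.
Proof. by rewrite -scaleN1r braketZr mulN1r. Qed.

Lemma braket_suml I (r : seq I) (P : pred I) (F : I -> 'cV[C]_n) y :
  braket W (\sum_(i <- r | P i) F i) y = \sum_(i <- r | P i) braket W (F i) y.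
Proof.
apply: (big_morph (braket W ^~ y) (fun x x' => braketDl x x' y)).
by rewrite /braket /adj map_mx0 trmx0 !mul0mx mxE.
Qed.

Lemma braket_sumr I (r : seq I) (P : pred I) (F : I -> 'cV[C]_n) x :
  braket W x (\sum_(i <- r | P i) F i) = \sum_(i <- r | P i) braket W x (F i).
Proof.
apply: (big_morph (braket W x) (braketDr x)).
by rewrite /braket mulmx0 mxE.
Qed.

Lemma braket_delta s t : braket W (delta_mx s 0) (delta_mx t 0) = W s t.
Proof. by rewrite /braket adj_delta -rowE -colE !mxE. Qed.

Lemma braket_sum_delta (I : finType) (f : I -> 'I_n) (a b : I -> C) :
  braket W (\sum_i a i *: delta_mx (f i) 0) (\sum_j b j *: delta_mx (f j) 0) =
  \sum_i \sum_j (a i)^* * b j * W (f i) (f j).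
Proof.
rewrite braket_suml; apply: eq_bigr => i _; rewrite braket_sumr.
by apply: eq_bigr => j _; rewrite braketZl braketZr braket_delta mulrA.
Qed.

Lemma braket_mulmx (B : 'M[C]_n) x y :
  braket W (B *m x) (B *m y) = braket (adj B *m W *m B) x y.
Proof. by rewrite /braket adjM !mulmxA. Qed.

End Braket.

Lemma col_sum_delta n (x : 'cV[C]_n) : x = \sum_i x i 0 *: delta_mx i 0.
Proof.
rewrite {1}[x]matrix_sum_delta; apply: eq_bigr => i _.
by rewrite big_ord1 (ord1 0).
Qed.

Lemma braketD n (W W' : 'M[C]_n) x y : braket (W + W') x y = braket W x y + braket W' x y.
Proof. by rewrite /braket mulmxDr mulmxDl mxE. Qed.
Lemma braketZ n (W : 'M[C]_n) a x y : braket (a *: W) x y = a * braket W x y.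
Proof. by rewrite /braket -scalemxAr -scalemxAl mxE. Qed.
Lemma braketN n (W : 'M[C]_n) x y : braket (- W) x y = - braket W x y.
Proof. by rewrite -scaleN1r braketZ mulN1r. Qed.
Lemma braket_sum n I (r : seq I) (F : I -> 'M[C]_n) x y :
  braket (\sum_(i <- r) F i) x y = \sum_(i <- r) braket (F i) x y.
Proof.
apply: (big_morph (fun W => braket W x y) (fun W W' => braketD W W' x y)).
by rewrite /braket mulmx0 mul0mx mxE.
Qed.

Lemma braket_outer n (u x y : 'cV[C]_n) :
  braket (u *m adj u) x y = (adj x *m u) 0 0 * (adj u *m y) 0 0.
Proof. by rewrite /braket mulmxA -(mulmxA (adj x *m u)) mxE big_ord1. Qed.

Lemma braket_outerC n (u x : 'cV[C]_n) :
  braket (u *m adj u) x x = braket (x *m adj x) u u.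
Proof. by rewrite !braket_outer mulrC. Qed.

Lemma braket1 n (x : 'cV[C]_n) : braket 1%:M x x = \tr (x *m adj x).
Proof. by rewrite mxtrace_mulC /mxtrace big_ord1 /braket mulmx1. Qed.

Lemma psd_outer n (u : 'cV[C]_n) : psd (u *m adj u).
Proof.
move=> x; rewrite -/(braket _ x x) braket_outer.
by rewrite -[(adj u *m x) 0 0]conjCK -adj_entry adjM adjK mul_conjC_ge0.
Qed.

Lemma psdD n (W W' : 'M[C]_n) : psd W -> psd W' -> psd (W + W').
Proof. by move=> W0 W'0 x; rewrite -/(braket _ x x) braketD addr_ge0 ?W0 ?W'0. Qed.

Lemma psdZ n (W : 'M[C]_n) a : 0 <= a -> psd W -> psd (a *: W).
Proof. by move=> a0 W0 x; rewrite -/(braket _ x x) braketZ mulr_ge0 ?W0. Qed.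

Lemma psd_sum n I (r : seq I) (F : I -> 'M[C]_n) :
  (forall i, psd (F i)) -> psd (\sum_(i <- r) F i).
Proof. by move=> F0 x; rewrite -/(braket _ x x) braket_sum sumr_ge0 // => i _; apply: F0. Qed.

Lemma psd_mulmx n (W B : 'M[C]_n) : psd W -> psd (adj B *m W *m B).
Proof. by move=> W0 x; rewrite -/(braket _ x x) -braket_mulmx; apply: W0. Qed.

Lemma psd_diag_ge0 n (W : 'M[C]_n) s : psd W -> 0 <= W s s.
Proof. by move=> W0; rewrite -braket_delta; apply: W0. Qed.

(* Cauchy-Schwarz for the seminorm of a psd matrix: expand sum_(i,j) ||f_i - f_j||^2 >= 0. *)
Lemma braket_sum_le n (W : 'M[C]_n) m (P : pred 'I_m) (f : 'I_m -> 'cV[C]_n) :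
  psd W ->
  braket W (\sum_(i | P i) f i) (\sum_(i | P i) f i) <=
    #|P|%:R * \sum_(i | P i) braket W (f i) (f i).
Proof.
move=> W0; set S := \sum_(i | P i) braket W (f i) (f i).
have sq_ge0 : 0 <= \sum_(i | P i) \sum_(j | P j) braket W (f i - f j) (f i - f j).
  by apply: sumr_ge0 => i _; apply: sumr_ge0 => j _; apply: W0.
have diag : \sum_(i | P i) \sum_(j | P j) (braket W (f i) (f i) + braket W (f j) (f j))
    = (#|P|%:R * S) *+ 2.
  under eq_bigr do rewrite big_split /=.
  rewrite big_split /= exchange_big /= !sumr_const -mulr2n.
  by rewrite -/S mulr_natl.
have cross : \sum_(i | P i) \sum_(j | P j) (braket W (f i) (f j) + braket W (f j) (f i))
    = braket W (\sum_(i | P i) f i) (\sum_(i | P i) f i) *+ 2.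
  under eq_bigr do rewrite big_split /=.
  rewrite big_split /= [X in _ + X]exchange_big /= -mulr2n braket_suml.
  by congr (_ *+ 2); apply: eq_bigr => i _; rewrite braket_sumr.
move: sq_ge0; rewrite (eq_bigr (fun i => \sum_(j | P j)
  ((braket W (f i) (f i) + braket W (f j) (f j)) -
   (braket W (f i) (f j) + braket W (f j) (f i))))); last first.
  move=> i _; apply: eq_bigr => j _.
  by rewrite braketDl !braketDr !braketNl !braketNr opprK; ring.
under eq_bigr do rewrite sumrB.
by rewrite sumrB diag cross -mulrnBl pmulrn_lge0 // subr_ge0.
Qed.

Lemma braket_sum_delta_le n (W : 'M[C]_n) m (P : pred 'I_m) (f : 'I_m -> 'I_n) :
  psd W ->
  braket W (\sum_(i | P i) delta_mx (f i) 0) (\sum_(i | P i) delta_mx (f i) 0) <=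
    #|P|%:R * \sum_(i | P i) W (f i) (f i).
Proof.
by move=> W0; under [X in _ <= _ * X]eq_bigr do rewrite -braket_delta; apply: braket_sum_le.
Qed.

(* With f x = braket W x x, the slack (m + 2) f(c) + (m + 2)/m (f(a) + f(b)) - f(c + a) -
   f(c + b) equals (f(a - b) + f(m c - a - b)) / m. *)
Lemma braket_pair_le n (W : 'M[C]_n) (c a b : 'cV[C]_n) (m : C) : psd W -> 0 < m ->
  braket W (c + a) (c + a) + braket W (c + b) (c + b) <=
    (m + 2) * braket W c c + (m + 2) / m * (braket W a a + braket W b b).
Proof.
move=> W0 m_gt0; rewrite -subr_ge0.
have -> : (m + 2) * braket W c c + (m + 2) / m * (braket W a a + braket W b b) -
    (braket W (c + a) (c + a) + braket W (c + b) (c + b)) =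
    m^-1 * (braket W (a - b) (a - b) + braket W (m *: c - a - b) (m *: c - a - b)).
  have m_real : m^* = m by rewrite conj_Creal ?gtr0_real.
  rewrite !braketDl !braketDr !braketNl !braketNr !braketZl !braketZr m_real.
  by field; rewrite gt_eqF.
by apply: mulr_ge0; [rewrite invr_ge0 ltW | apply: addr_ge0; apply: W0].
Qed.

End Sesquilinear.

Section Tripartite.
Variables (C : numClosedFieldType) (d : nat).
Hypothesis d_ge2 : (2 <= d)%N.
Local Notation N := (d * d * d)%N.
Local Notation V := (Vswap C d).
Local Notation X := (Xop C d).
Local Notation Phi := (Phi C d).
Local Notation e3 s := (delta_mx s 0 : 'cV[C]_N).

Lemma ket2_eq (a b a' b' : 'I_d) :
  (ket2 a b == ket2 a' b') = (a == a') && (b == b').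
Proof. exact: mxvec_index_eq. Qed.

Lemma ket3_eq (a b c a' b' c' : 'I_d) :
  (ket3 a b c == ket3 a' b' c') = [&& a == a', b == b' & c == c'].
Proof. by rewrite /ket3 mxvec_index_eq ket2_eq andbA. Qed.

Lemma sum_ket3 (U : nmodType) (F : 'I_N -> U) :
  \sum_s F s = \sum_(a < d) \sum_(b < d) \sum_(c < d) F (ket3 a b c).
Proof. by rewrite sum_mxvec sum_mxvec. Qed.

Lemma matrix_ket2P (A B : 'M[C]_(d * d)) :
  (forall a b a' b', A (ket2 a b) (ket2 a' b') = B (ket2 a b) (ket2 a' b')) -> A = B.
Proof.
move=> AB; apply/matrixP => x y.
by case/mxvec_indexP: x => a b; case/mxvec_indexP: y => a' b'; apply: AB.
Qed.

Lemma matrix_ket3P m (A B : 'M[C]_(m, N)) :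
  (forall s a b c, A s (ket3 a b c) = B s (ket3 a b c)) -> A = B.
Proof.
move=> AB; apply/matrixP => s t.
by case/mxvec_indexP: t => ab c; case/mxvec_indexP: ab => a b; apply: AB.
Qed.

Lemma Vswap_ket3 a b c : V *m e3 (ket3 a b c) = e3 (ket3 a c b).
Proof.
rewrite /Vswap !mulmx_suml (sumr_ord_only a); last first.
  move=> i ia; rewrite !mulmx_suml big1 // => j _; rewrite mulmx_suml big1 // => k _.
  by rewrite mul_delta_mx_cond ket3_eq (negbTE ia) /= mulr0n.
rewrite mulmx_suml (sumr_ord_only c); last first.
  move=> j jc; rewrite mulmx_suml big1 // => k _.
  by rewrite mul_delta_mx_cond ket3_eq (negbTE jc) !andbF mulr0n.
rewrite mulmx_suml (sumr_ord_only b) => [|k kb]; last first.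
  by rewrite mul_delta_mx_cond ket3_eq (negbTE kb) !andbF mulr0n.
by rewrite mul_delta_mx_cond !eqxx mulr1n.
Qed.

Lemma mulmx_Vswap_entry m (M : 'M[C]_(m, N)) s a b c :
  (M *m V) s (ket3 a b c) = M s (ket3 a c b).
Proof.
have col_entry (A : 'M[C]_(m, N)) t : A s t = (A *m e3 t) s 0 by rewrite -colE mxE.
by rewrite [LHS]col_entry [RHS]col_entry -mulmxA Vswap_ket3.
Qed.

Lemma Vswap_entry a b c a' b' c' :
  V (ket3 a b c) (ket3 a' b' c') = [&& a == a', b == c' & c == b']%:R.
Proof. by rewrite -[V]mul1mx mulmx_Vswap_entry mxE ket3_eq. Qed.

Lemma adj_Vswap : adj V = V.
Proof.
apply: matrix_ket3P => s a' b' c'; case/mxvec_indexP: s => ab c.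
case/mxvec_indexP: ab => a b.
by rewrite adj_entry !Vswap_entry conjC_nat (eq_sym a') (eq_sym b') (eq_sym c') (andbC (c == b')).
Qed.

Lemma Vswap_mulmx_entry m (M : 'M[C]_(N, m)) a b c t :
  (V *m M) (ket3 a b c) t = M (ket3 a c b) t.
Proof.
rewrite -[V *m M]adjK adjM adj_Vswap adj_entry mulmx_Vswap_entry.
by rewrite adj_entry conjCK.
Qed.

Lemma Vswap_mulVV : V *m V = 1%:M.
Proof.
apply: matrix_ket3P => s a b c.
by rewrite mulmx_Vswap_entry -[V]mul1mx mulmx_Vswap_entry.
Qed.

Definition Phi_ket (k : 'I_d) : 'cV[C]_N := \sum_(i < d) e3 (ket3 i i k).

Lemma Phi_ket_entry a b c k : Phi_ket k (ket3 a b c) 0 = ((a == b) && (c == k))%:R.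
Proof.
rewrite /Phi_ket summxE (sumr_ord_only a) => [|i ia]; last first.
  by rewrite mxE ket3_eq eq_sym (negbTE ia).
by rewrite mxE ket3_eq eqxx eq_sym andbT.
Qed.

Lemma Xop_sum : X = \sum_(k < d) Phi_ket k *m adj (Phi_ket k).
Proof.
rewrite /Xop; under eq_bigr do rewrite exchange_big; rewrite exchange_big /=.
apply: eq_bigr => k _; rewrite /Phi_ket mulmx_suml; apply: eq_bigr => i _.
rewrite adj_sum mulmx_sumr; apply: eq_bigr => j _.
by rewrite adj_delta mul_delta_mx.
Qed.

Lemma Xop_entry a b c a' b' c' :
  X (ket3 a b c) (ket3 a' b' c') = [&& a == b, a' == b' & c == c']%:R.
Proof.
rewrite Xop_sum summxE (sumr_ord_only c) => [|k kc]; last first.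
  by rewrite mxE big_ord1 adj_entry !Phi_ket_entry (eq_sym c) (negbTE kc) andbF mul0r.
rewrite mxE big_ord1 adj_entry !Phi_ket_entry conjC_nat -natrM mulnb eqxx.
by rewrite andbT (eq_sym c').
Qed.

(** * Bounding the weight of W on the vectors |Phi>|k> *)

Lemma Vswap_Phi_ket k : V *m Phi_ket k = \sum_(i < d) e3 (ket3 i k i).
Proof. by rewrite mulmx_sumr; apply: eq_bigr => i _; rewrite Vswap_ket3. Qed.

(* The diagonal entries at |kkk>, |iik> and |iki> (i != k) are pairwise distinct. *)
Lemma diag_sum_le_trace (W : 'M[C]_N) : psd W ->
  \sum_(k < d) (W (ket3 k k k) (ket3 k k k)
     + \sum_(i | i != k) W (ket3 i i k) (ket3 i i k)
     + \sum_(i | i != k) W (ket3 i k i) (ket3 i k i)) <= \tr W.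
Proof.
move=> W0; pose w a b c := W (ket3 a b c) (ket3 a b c).
have diag_iik : \sum_(k < d) (w k k k + \sum_(i | i != k) w i i k) =
    \sum_(a < d) \sum_(b < d) \sum_(c < d) (a == b)%:R * w a b c.
  transitivity (\sum_(c < d) \sum_(a < d) w a a c).
    by apply: eq_bigr => k _; rewrite [RHS](bigD1 k).
  rewrite exchange_big /=; apply: eq_bigr => a _.
  rewrite [RHS](sumr_ord_only a) => [|b ba]; last first.
    by apply: big1 => c _; rewrite eq_sym (negbTE ba) mul0r.
  by apply: eq_bigr => c _; rewrite eqxx mul1r.
have diag_iki : \sum_(k < d) \sum_(i | i != k) w i k i =
    \sum_(a < d) \sum_(b < d) \sum_(c < d) ((a == c) && (a != b))%:R * w a b c.
  under eq_bigr do rewrite big_mkcond /=.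
  rewrite [LHS]exchange_big /=; apply: eq_bigr => a _; apply: eq_bigr => b _.
  rewrite (sumr_ord_only a) => [|c ca]; last by rewrite eq_sym (negbTE ca) mul0r.
  by rewrite eqxx; case: (a != b); rewrite ?mul1r ?mul0r.
rewrite big_split /= diag_iik diag_iki -big_split /= /mxtrace sum_ket3.
apply: ler_sum => a _; rewrite -big_split; apply: ler_sum => b _.
rewrite -big_split; apply: ler_sum => c _ /=.
have := psd_diag_ge0 (ket3 a b c) W0; rewrite -/(w a b c).
by case: (a == b); case: (a == c); rewrite ?mul0r ?mul1r ?addr0 ?add0r ?lexx.
Qed.

Lemma braket_Phi_ket_le (W : 'M[C]_N) k : psd W ->
  braket W (Phi_ket k) (Phi_ket k) + braket W (V *m Phi_ket k) (V *m Phi_ket k)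
  <= (d + 1)%:R * (W (ket3 k k k) (ket3 k k k)
     + \sum_(i | i != k) W (ket3 i i k) (ket3 i i k)
     + \sum_(i | i != k) W (ket3 i k i) (ket3 i k i)).
Proof.
move=> W0; set m : C := (d.-1)%:R.
have m_gt0 : 0 < m by rewrite ltr0n -subn1 subn_gt0.
have d1E : (d + 1)%:R = m + 2 by rewrite /m -natrD addn1 addn2 prednK // ltnW.
have card_k : #|[pred i : 'I_d | i != k]| = d.-1 by rewrite cardC1 card_ord.
have al_le := braket_sum_delta_le [pred i | i != k] (fun i => ket3 i i k) W0.
have be_le := braket_sum_delta_le [pred i | i != k] (fun i => ket3 i k i) W0.
rewrite card_k -/m in al_le be_le.
have uE : Phi_ket k = e3 (ket3 k k k) + \sum_(i | i != k) e3 (ket3 i i k).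
  by rewrite /Phi_ket (bigD1 k).
have vE : V *m Phi_ket k = e3 (ket3 k k k) + \sum_(i | i != k) e3 (ket3 i k i).
  by rewrite Vswap_Phi_ket (bigD1 k).
rewrite vE uE d1E; apply: le_trans (braket_pair_le _ _ _ W0 m_gt0) _.
rewrite braket_delta -addrA [X in _ <= X]mulrDr lerD2l.
apply: le_trans (ler_wpM2l _ (lerD al_le be_le)) _.
  by rewrite divr_ge0 ?addr_ge0 ?ltW.
by rewrite -mulrDr mulrA divfK ?gt_eqF.
Qed.

Lemma sum_braket_Phi_ket_le (W : 'M[C]_N) : psd W ->
  \sum_(k < d) (braket W (Phi_ket k) (Phi_ket k)
                + braket W (V *m Phi_ket k) (V *m Phi_ket k))
  <= (d + 1)%:R * \tr W.
Proof.
move=> W0; apply: le_trans (ler_wpM2l (ler0n _ _) (diag_sum_le_trace W0)).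
by rewrite mulr_sumr; apply: ler_sum => k _; apply: braket_Phi_ket_le.
Qed.

Lemma sym_sum_braket_Phi_ket_le (W : 'M[C]_N) : psd W -> V *m W *m V = W ->
  (\sum_(k < d) braket W (Phi_ket k) (Phi_ket k)) *+ 2 <= (d + 1)%:R * \tr W.
Proof.
move=> W0 WV; have := sum_braket_Phi_ket_le W0.
by under eq_bigr do rewrite braket_mulmx adj_Vswap WV; rewrite big_split mulr2n.
Qed.

(** * Partial trace over the third factor *)

Lemma ptr3_entry (W : 'M[C]_N) a b a' b' :
  ptr3 W (ket2 a b) (ket2 a' b') = \sum_(c < d) W (ket3 a b c) (ket3 a' b' c).
Proof. by rewrite mxE. Qed.

Lemma ptr3D (W W' : 'M[C]_N) : ptr3 (W + W') = ptr3 W + ptr3 W'.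
Proof. by apply/matrixP => x y; rewrite !mxE -big_split; apply: eq_bigr => c _; rewrite mxE. Qed.

Lemma ptr3Z a (W : 'M[C]_N) : ptr3 (a *: W) = a *: ptr3 W.
Proof. by apply/matrixP => x y; rewrite !mxE mulr_sumr; apply: eq_bigr => c _; rewrite mxE. Qed.

Lemma ptr3N (W : 'M[C]_N) : ptr3 (- W) = - ptr3 W.
Proof. by rewrite -scaleN1r ptr3Z scaleN1r. Qed.

Lemma mxtrace_ptr3 (W : 'M[C]_N) : \tr (ptr3 W) = \tr W.
Proof.
rewrite /mxtrace sum_ket3 sum_mxvec; apply: eq_bigr => a _; apply: eq_bigr => b _.
exact: ptr3_entry.
Qed.

Definition kron_ket (x : 'cV[C]_(d * d)) (c : 'I_d) : 'cV[C]_N :=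
  \sum_y x y 0 *: delta_mx (mxvec_index y c) 0.

Lemma braket_ptr3 (W : 'M[C]_N) x :
  braket (ptr3 W) x x = \sum_(c < d) braket W (kron_ket x c) (kron_ket x c).
Proof.
rewrite {1 2}(col_sum_delta x) (braket_sum_delta _ id).
under [RHS]eq_bigr do rewrite braket_sum_delta.
rewrite [RHS]exchange_big; apply: eq_bigr => i _.
rewrite [RHS]exchange_big; apply: eq_bigr => j _.
by rewrite mxE mulr_sumr.
Qed.

Lemma psd_ptr3 (W : 'M[C]_N) : psd W -> psd (ptr3 W).
Proof.
move=> W0 x; rewrite -/(braket _ x x) braket_ptr3.
by apply: sumr_ge0 => c _; apply: W0.
Qed.

Lemma Phi_entry a b : Phi (ket2 a b) 0 = (a == b)%:R.
Proof.
rewrite mxE (sumr_ord_only a) => [|i ia]; last by rewrite ket2_eq eq_sym (negbTE ia).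
by rewrite ket2_eq eqxx eq_sym.
Qed.

Lemma kron_ket_Phi k : kron_ket Phi k = Phi_ket k.
Proof.
rewrite /kron_ket sum_mxvec; apply: eq_bigr => a _.
rewrite (sumr_ord_only a) => [|b ba]; last by rewrite Phi_entry eq_sym (negbTE ba) scale0r.
by rewrite Phi_entry eqxx scale1r.
Qed.

Definition PhiPhi : 'M[C]_(d * d) := Phi *m adj Phi.

Lemma PhiPhi_entry a b a' b' :
  PhiPhi (ket2 a b) (ket2 a' b') = ((a == b) && (a' == b'))%:R.
Proof. by rewrite mxE big_ord1 adj_entry !Phi_entry conjC_nat -natrM mulnb. Qed.

Lemma mx1_ket2_entry a b a' b' :
  (1%:M : 'M[C]_(d * d)) (ket2 a b) (ket2 a' b') = ((a == a') && (b == b'))%:R.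
Proof. by rewrite mxE ket2_eq. Qed.

Lemma ptr3_1 : ptr3 (1%:M : 'M[C]_N) = d%:R *: 1%:M.
Proof.
apply: matrix_ket2P => a b a' b'.
rewrite ptr3_entry mxE mx1_ket2_entry.
under eq_bigr do rewrite mxE ket3_eq eqxx andbT.
by rewrite sumr_const card_ord mulr_natl.
Qed.

Lemma ptr3_Vswap : ptr3 V = 1%:M.
Proof.
apply: matrix_ket2P => a b a' b'.
rewrite ptr3_entry mx1_ket2_entry (sumr_ord_only b) => [|c cb].
  by rewrite Vswap_entry eqxx.
by rewrite Vswap_entry (eq_sym b c) (negbTE cb) /= andbF.
Qed.

Lemma ptr3_Xop : ptr3 X = d%:R *: PhiPhi.
Proof.
apply: matrix_ket2P => a b a' b'.
rewrite ptr3_entry mxE PhiPhi_entry.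
under eq_bigr do rewrite Xop_entry eqxx andbT.
by rewrite sumr_const card_ord mulr_natl.
Qed.

Lemma ptr3_Vswap_Xop_Vswap : ptr3 (V *m X *m V) = 1%:M.
Proof.
apply: matrix_ket2P => a b a' b'; rewrite ptr3_entry.
under eq_bigr do rewrite mulmx_Vswap_entry Vswap_mulmx_entry Xop_entry.
rewrite mx1_ket2_entry (sumr_ord_only a) => [|c ca]; last by rewrite eq_sym (negbTE ca).
by rewrite eqxx eq_sym.
Qed.

Lemma ptr3_Xop_Vswap : ptr3 (X *m V) = PhiPhi.
Proof.
apply: matrix_ket2P => a b a' b'; rewrite ptr3_entry.
under eq_bigr do rewrite mulmx_Vswap_entry Xop_entry.
rewrite PhiPhi_entry (sumr_ord_only a') => [|c ca]; last by rewrite (eq_sym a') (negbTE ca) andbF.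
by rewrite eqxx.
Qed.

Lemma ptr3_Vswap_Xop : ptr3 (V *m X) = PhiPhi.
Proof.
apply: matrix_ket2P => a b a' b'; rewrite ptr3_entry.
under eq_bigr do rewrite Vswap_mulmx_entry Xop_entry.
rewrite PhiPhi_entry (sumr_ord_only a) => [|c ca]; last by rewrite eq_sym (negbTE ca).
by rewrite eqxx /= (eq_sym b) andbC.
Qed.

(** * Isotropic states *)

Lemma isotropic_convex (t F G : C) :
  isotropic d (t * F + (1 - t) * G) = t *: isotropic d F + (1 - t) *: isotropic d G.
Proof.
rewrite /isotropic !scalerDr !scalerA addrACA -!scalerDl.
by congr (_ *: _ + _ *: _); ring.
Qed.

Lemma normsq_inv_sqrtC : ((sqrtC d%:R)^-1)^* * (sqrtC d%:R)^-1 = (d%:R : C)^-1.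
Proof.
rewrite geC0_conj; last by rewrite invr_ge0 sqrtC_ge0 ler0n.
by rewrite -invfM -expr2 sqrtCK.
Qed.

Lemma Pplus_PhiPhi : Pplus C d = d%:R^-1 *: PhiPhi.
Proof.
rewrite /Pplus /PsiPlus adjZ -scalemxAl -scalemxAr scalerA mulrC.
by rewrite normsq_inv_sqrtC.
Qed.

Lemma fidelityE (sigma : 'M[C]_(d * d)) :
  fidelity sigma = d%:R^-1 * braket sigma Phi Phi.
Proof.
by rewrite /fidelity -/(braket _ _ _) /PsiPlus braketZl braketZr mulrA normsq_inv_sqrtC.
Qed.

Lemma fidelity_ptr3 (W : 'M[C]_N) :
  fidelity (ptr3 W) = d%:R^-1 * \sum_(k < d) braket W (Phi_ket k) (Phi_ket k).
Proof.
by rewrite fidelityE braket_ptr3; under eq_bigr do rewrite kron_ket_Phi.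
Qed.

Lemma Phi_sum : Phi = \sum_(i < d) delta_mx (ket2 i i) 0.
Proof.
apply/matrixP => x y; rewrite !mxE summxE; apply: eq_bigr => i _.
by rewrite !mxE (ord1 y) eqxx andbT.
Qed.

Lemma braket_Phi (sigma : 'M[C]_(d * d)) :
  braket sigma Phi Phi = \sum_(i < d) \sum_(j < d) sigma (ket2 i i) (ket2 j j).
Proof.
rewrite Phi_sum braket_suml; apply: eq_bigr => i _; rewrite braket_sumr.
by apply: eq_bigr => j _; rewrite braket_delta.
Qed.

Lemma braket1_Phi : braket 1%:M Phi Phi = d%:R.
Proof.
rewrite braket_Phi (eq_bigr (fun=> 1)) => [|i _]; first by rewrite sumr_const card_ord.
rewrite (sumr_ord_only i) => [|j ji]; last by rewrite mx1_ket2_entry eq_sym (negbTE ji).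
by rewrite mx1_ket2_entry eqxx.
Qed.

Lemma braket_PhiPhi_Phi : braket PhiPhi Phi Phi = d%:R ^+ 2.
Proof.
have PhiPhi00 : (adj Phi *m Phi) 0 0 = d%:R by rewrite -braket1_Phi /braket mulmx1.
by rewrite braket_outer PhiPhi00 expr2.
Qed.

Lemma mxtrace_PhiPhi : \tr PhiPhi = d%:R.
Proof. by rewrite -braket1 braket1_Phi. Qed.

Lemma natr_dim_neq0 :
  [/\ (d%:R : C) != 0, (d%:R : C) + 1 != 0, (d%:R : C) + 2 != 0 &
      (d%:R : C) ^+ 2 - 1 != 0].
Proof.
have d0 : (d%:R : C) != 0 by rewrite pnatr_eq0 -lt0n ltnW.
have d1 : (d%:R : C) + 1 != 0 by rewrite natr1 pnatr_eq0.
have d2 : (d%:R : C) + 2 != 0 by rewrite -natrD pnatr_eq0 addn2.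
split => //; have -> : (d%:R : C) ^+ 2 - 1 = (d%:R - 1) * (d%:R + 1) by ring.
by rewrite mulf_neq0 // subr_eq0 pnatr_eq1 gtn_eqF.
Qed.

Lemma natr_sqr_sub1 : ((d ^ 2 - 1)%:R : C) = d%:R ^+ 2 - 1.
Proof. by rewrite natrB ?natrX // expn_gt0 ltnW. Qed.

Lemma isotropicE (F : C) : isotropic d F =
  ((1 - F) / (d%:R ^+ 2 - 1)) *: 1%:M +
  ((F * d%:R ^+ 2 - 1) / (d%:R * (d%:R ^+ 2 - 1))) *: PhiPhi.
Proof.
have [d0 _ _ d21] := natr_dim_neq0.
rewrite /isotropic Pplus_PhiPhi scalerDr !scalerA natr_sqr_sub1 natrX.
by congr (_ *: _ + _ *: _); field; rewrite d0 d21.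
Qed.

Lemma mxtrace_isotropic (F : C) : \tr (isotropic d F) = 1.
Proof.
have [d0 _ _ d21] := natr_dim_neq0.
rewrite isotropicE mxtraceD !mxtraceZ mxtrace_PhiPhi mxtrace1 natrM -expr2.
by field; rewrite d0 d21.
Qed.

Lemma fidelity_isotropic (F : C) : fidelity (isotropic d F) = F.
Proof.
have [d0 _ _ d21] := natr_dim_neq0.
rewrite fidelityE isotropicE braketD !braketZ braket1_Phi braket_PhiPhi_Phi.
by field; rewrite d0 d21.
Qed.

(** * Symmetric extensions *)

Lemma sym_ext_by_convex (t : C) (rho1 rho2 : 'M[C]_(d * d)) (W1 W2 : 'M[C]_N) :
  0 <= t <= 1 -> sym_ext_by rho1 W1 -> sym_ext_by rho2 W2 ->
  sym_ext_by (t *: rho1 + (1 - t) *: rho2) (t *: W1 + (1 - t) *: W2).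
Proof.
case/andP=> t0 t1 [[W1_psd W1_tr] [W1_sym W1_ptr]] [[W2_psd W2_tr] [W2_sym W2_ptr]].
split; [split | split].
- by apply: psdD; apply: psdZ; rewrite ?subr_ge0.
- by rewrite mxtraceD !mxtraceZ W1_tr W2_tr !mulr1 addrC subrK.
- by rewrite mulmxDr mulmxDl -!scalemxAr -!scalemxAl W1_sym W2_sym.
- by rewrite ptr3D !ptr3Z W1_ptr W2_ptr.
Qed.

Lemma in_Ed_sym_ext_by (rho : 'M[C]_(d * d)) (W : 'M[C]_N) :
  sym_ext_by rho W -> in_Ed rho.
Proof.
move=> ext; split; last by exists W.
case: ext => [[W_psd W_tr] [_ <-]].
by split; [apply: psd_ptr3 | rewrite mxtrace_ptr3].
Qed.

Definition SymV : 'M[C]_N := 1%:M + V.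
Definition XSym : 'M[C]_N := SymV *m X *m SymV.

Lemma adj_SymV : adj SymV = SymV.
Proof. by rewrite /SymV adjD adj1 adj_Vswap. Qed.

Lemma Vswap_SymV : V *m SymV = SymV.
Proof. by rewrite /SymV mulmxDr mulmx1 Vswap_mulVV addrC. Qed.

Lemma SymV_Vswap : SymV *m V = SymV.
Proof. by rewrite /SymV mulmxDl mul1mx Vswap_mulVV addrC. Qed.

Lemma SymV_sqr : SymV *m SymV = SymV *+ 2.
Proof. by rewrite {1}/SymV mulmxDl mul1mx Vswap_SymV. Qed.

Lemma XSymE : XSym = X + V *m X *m V + (X *m V + V *m X).
Proof.
rewrite /XSym /SymV !mulmxDl !mulmxDr !mul1mx !mulmx1 -!addrA; congr (_ + _).
by rewrite [RHS]addrC -addrA.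
Qed.

Lemma ptr3_XSym : ptr3 XSym = (d + 2)%:R *: PhiPhi + 1%:M.
Proof.
rewrite XSymE !ptr3D ptr3_Xop ptr3_Vswap_Xop_Vswap ptr3_Xop_Vswap ptr3_Vswap_Xop.
by rewrite addrAC natrD scalerDl [2 *: _]scaler_nat mulr2n.
Qed.

Lemma psd_XSym : psd XSym.
Proof.
rewrite /XSym -{1}adj_SymV; apply: psd_mulmx.
by rewrite Xop_sum; apply: psd_sum => k; apply: psd_outer.
Qed.

Lemma Vswap_XSym : V *m XSym *m V = XSym.
Proof. by rewrite /XSym !mulmxA Vswap_SymV -[SymV *m X *m SymV *m V]mulmxA SymV_Vswap. Qed.

Lemma sym_ext_by_isotropic (F : C) (W : 'M[C]_N) :
  psd W -> V *m W *m V = W -> ptr3 W = isotropic d F -> sym_ext_by (isotropic d F) W.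
Proof.
move=> W_psd W_sym W_ptr; split; [split | by []] => //.
by rewrite -mxtrace_ptr3 W_ptr mxtrace_isotropic.
Qed.

Lemma Omega_XSym : Omega C d = ((2 * d)%:R * (d + 1)%:R)^-1 *: XSym.
Proof.
have [d0 d1 _ d21] := natr_dim_neq0.
have sum_swap (x : C) (P Q : 'M[C]_N) :
    x *: P - Q + (x *: Q - P) = (x - 1) *: (P + Q).
  by rewrite scalerBl scale1r scalerDr opprD addrACA [- Q + _]addrC.
rewrite /Omega /S0 /S1 -scalerDr sum_swap -XSymE !scalerA natr_sqr_sub1.
by congr (_ *: _); rewrite natrM natrD; field; rewrite d0 d1 d21.
Qed.

Lemma Omega_ext : sym_ext_by (isotropic d (Fmax C d)) (Omega C d).
Proof.
have [d0 d1 _ d21] := natr_dim_neq0.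
rewrite Omega_XSym; apply: sym_ext_by_isotropic.
- by apply: psdZ; [rewrite invr_ge0 mulr_ge0 | exact: psd_XSym].
- by rewrite -scalemxAr -scalemxAl Vswap_XSym.
rewrite ptr3Z ptr3_XSym isotropicE scalerDr scalerA addrC /Fmax.
by congr (_ *: _ + _ *: _); rewrite !natrM !natrD; field; rewrite d0 d1 d21.
Qed.

Lemma psd_SymV_sub_XSym : psd ((d + 1)%:R *: SymV - XSym).
Proof.
(* For the swap invariant y = SymV x: <x|XSym|x> = <y|X|y> and 2 <x|SymV|x> = |y|^2. *)
move=> x; rewrite -/(braket _ x x); set y := SymV *m x.
have Vy : V *m y = y by rewrite /y mulmxA Vswap_SymV.
have yy_sym : V *m (y *m adj y) *m V = y *m adj y.
  have yV : adj y *m V = adj y by rewrite -adj_Vswap -adjM Vy.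
  by rewrite mulmxA Vy -mulmxA yV.
have XSym_y : braket XSym x x = braket X y y by rewrite /y braket_mulmx adj_SymV.
have SymV_y : braket 1%:M y y = braket SymV x x *+ 2.
  by rewrite /y braket_mulmx adj_SymV mulmx1 SymV_sqr -scaler_nat braketZ mulr_natl.
have X_y : braket X y y *+ 2 <= (d + 1)%:R * braket 1%:M y y.
  have := sym_sum_braket_Phi_ket_le (psd_outer y) yy_sym.
  by rewrite -braket1 Xop_sum braket_sum; under eq_bigr do rewrite braket_outerC.
rewrite braketD braketN braketZ XSym_y subr_ge0.
by move: X_y; rewrite SymV_y mulrnAr lerMn2r.
Qed.

(* Normalised so that its partial trace is [isotropic d 0]. *)
Definition Omega0 : 'M[C]_N :=
  ((d * (d + 2) * (d ^ 2 - 1))%:R)^-1 *: ((d + 1)%:R *: SymV - XSym).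

Lemma ptr3_SymV : ptr3 SymV = (d + 1)%:R *: 1%:M.
Proof. by rewrite ptr3D ptr3_1 ptr3_Vswap natrD scalerDl scale1r. Qed.

Lemma Omega0_ext : sym_ext_by (isotropic d 0) Omega0.
Proof.
have [d0 d1 d2 d21] := natr_dim_neq0.
apply: sym_ext_by_isotropic.
- by apply: psdZ; [rewrite invr_ge0 ler0n | exact: psd_SymV_sub_XSym].
- rewrite -scalemxAr -scalemxAl mulmxBr mulmxBl -scalemxAr -scalemxAl.
  by rewrite Vswap_SymV SymV_Vswap Vswap_XSym.
rewrite ptr3Z ptr3D ptr3N ptr3Z ptr3_SymV ptr3_XSym isotropicE.
have -> : (d + 1)%:R *: ((d + 1)%:R *: 1%:M) - ((d + 2)%:R *: PhiPhi + 1%:M) =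
    ((d + 1)%:R * (d + 1)%:R - 1) *: 1%:M + (- (d + 2)%:R) *: PhiPhi :> 'M[C]_(d * d).
  by rewrite scalerA scalerBl scale1r scaleNr opprD addrA addrAC.
rewrite scalerDr !scalerA !natrM natr_sqr_sub1.
by congr (_ *: _ + _ *: _); rewrite !natrD; field; rewrite d0 d2 d21.
Qed.

Lemma Fmax_gt0 : 0 < Fmax C d.
Proof. by apply: divr_gt0; rewrite ltr0n ?addn1 // muln_gt0 (ltnW d_ge2). Qed.

Lemma sym_extendible_isotropic (F : C) :
  0 <= F -> F <= Fmax C d -> sym_extendible (isotropic d F).
Proof.
move=> F_ge0 F_le; set t := F / Fmax C d.
have t01 : 0 <= t <= 1 by rewrite divr_ge0 ?ler_pdivrMr ?mul1r ?Fmax_gt0 // ltW ?Fmax_gt0.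
have -> : F = t * Fmax C d + (1 - t) * 0 by rewrite mulr0 addr0 divfK // gt_eqF ?Fmax_gt0.
rewrite isotropic_convex; eexists.
exact: sym_ext_by_convex t01 Omega_ext Omega0_ext.
Qed.

Lemma fidelity_le_Fmax (sigma : 'M[C]_(d * d)) : in_Ed sigma -> fidelity sigma <= Fmax C d.
Proof.
case=> _ [W [[W_psd W_tr] [W_sym <-]]]; rewrite fidelity_ptr3.
have := sym_sum_braket_Phi_ket_le W_psd W_sym; rewrite W_tr mulr1.
set S := \sum_(k < d) _ => S_le.
have [d0 _ _ _] := natr_dim_neq0.
have -> : d%:R^-1 * S = S *+ 2 / (2 * d)%:R by rewrite natrM mulr2n; field.
by rewrite ler_wpM2r ?invr_ge0.
Qed.

End Tripartite.

Theorem mainTheorem6 (C : numClosedFieldType) (d : nat) (hd : (2 <= d)%N) :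
  ((exists sigma : 'M[C]_(d * d), in_Ed sigma /\ fidelity sigma = Fmax C d) /\
   (forall sigma : 'M[C]_(d * d), in_Ed sigma -> fidelity sigma <= Fmax C d)) /\
  (forall F : C, 0 <= F -> F <= 1 -> F <= Fmax C d -> sym_extendible (isotropic d F)) /\
  sym_ext_by (isotropic d (Fmax C d)) (Omega C d).
Proof.
split; [split | split].
- exists (isotropic d (Fmax C d)); split.
    exact: in_Ed_sym_ext_by (Omega_ext C hd).
  exact: fidelity_isotropic.
- by move=> sigma; apply: fidelity_le_Fmax.
- by move=> F F_ge0 _; apply: sym_extendible_isotropic.
- exact: Omega_ext.
Qed.
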